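(* Let $d\ge2$ be even, let $\bar K^\infty(t)=\frac{1}{4\pi}(t+1)(\pi-\arccos t)$, and for integers $k\ge0$ define $$c_k^d=V_d\int_{-1}^1\bar K^\infty(t)\,P_{k,d}(t)\,(1-t^2)^{\frac{d-2}{2}}\,dt,\qquad V_d=\frac{\pi^{d/2}}{\Gamma(\frac d2+1)}.$$ With $p=k+\frac{d-2}{2}$, $C_1(d,k)=\frac{\pi^{d/2}}{d/2}\frac{(-1)^k}{2^k}\frac{1}{\Gamma(k+\frac d2)}$ and $C_2(q,d,k)=(-1)^q\binom{p}{q}\frac{(2q)!}{(2q-k)!}$, one has $$c_0^d=\tfrac12C_1(d,0)\Big(\frac{1}{d\,2^{d+1}}\binom{d}{d/2}+\frac{2^{d-1}}{d\binom{d-1}{d/2}}-\frac12\sum_{q=0}^{\frac{d-2}{2}}(-1)^q\binom{\frac{d-2}{2}}{q}\frac{1}{2q+1}\Big),$$ $$c_1^d=\tfrac12C_1(d,1)\sum_{q=1}^{p}C_2(q,d,1)\Big(\frac{1}{2(2q+1)}+\frac{1}{4q}\Big(1-\frac{1}{2^{2q}}\binom{2q}{q}\Big)\Big),$$ for even $k\ge2$: $$c_k^d=\tfrac12C_1(d,k)\sum_{q=\lceil k/2\rceil}^{p}C_2(q,d,k)\Big(\frac{-1}{2(2q-k+1)}+\frac{1}{2(2q-k+2)}\Big(1-\frac{1}{2^{2q-k+2}}\binom{2q-k+2}{\frac{2q-k+2}{2}}\Big)\Big),$$ and for odd $k\ge3$: $$c_k^d=\tfrac12C_1(d,k)\sum_{q=\lceil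 k/2\rceil}^{p}C_2(q,d,k)\,\frac{1}{2(2q-k+1)}\Big(1-\frac{1}{2^{2q-k+1}}\binom{2q-k+1}{\frac{2q-k+1}{2}}\Big).$$
   Context: $P_{k,d}$ is the Gegenbauer polynomial (zonal harmonic of degree $k$ on $\mathbb{S}^d\subset\mathbb{R}^{d+1}$): $P_{k,d}(t)=\frac{(-1)^k}{2^k}\frac{\Gamma(\frac d2)}{\Gamma(k+\frac d2)}\frac{1}{(1-t^2)^{\frac{d-2}{2}}}\frac{d^k}{dt^k}(1-t^2)^{k+\frac{d-2}{2}}$. $\bar K^\infty$ is the limiting Gram kernel of a two-layer ReLU network with bias (bias initialized at $0$, inputs in homogeneous coordinates $\frac{1}{\sqrt2}(\mathbf{x}^T,1)^T$); by the Funk–Hecke theorem $c_k^d$ is (up to the $k$-independent constant $V_d$) the eigenvalue of convolution with $\bar K^\infty$ on spherical harmonics of degree $k$. $\binom{p}{q}=0$ when $q>p$. *)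

From Stdlib Require Import Reals Lra Lia Arith List.
Open Scope R_scope.

Inductive nth_deriv : nat -> (R -> R) -> (R -> R) -> Prop :=
| nth_deriv_0 (f : R -> R) : nth_deriv 0 f f
| nth_deriv_S (n : nat) (f g h : R -> R) :
    nth_deriv n f g -> (forall x, derivable_pt_lim g x (h x)) ->
    nth_deriv (S n) f h.

(* Gamma function at a positive integer n : Gamma n = (n-1)!.
   (d is even, so every Gamma value in the statement is at a positive integer.) *)
Definition Gamma_nat (n : nat) : R := INR (fact (n - 1)).

Definition binom (p q : nat) : R := if (q <=? p)%nat then C p q else 0.

(* sum_{q=a}^{b} f q  (empty if b < a) *)
Definition sumR (a b : nat) (f : nat -> R) : R :=
  fold_right Rplus 0 (map f (seq a (S b - a))).

Definition Kbar (t : R) : R := / (4 * PI) * (t + 1) * (PI - acos t).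

Definition hm (d : nat) : nat := ((d - 2) / 2)%nat.

(* Gegenbauer polynomial via Rodrigues' formula, given g = k-th derivative
   of t |-> (1-t^2)^(k + (d-2)/2). *)
Definition Pkd (d k : nat) (g : R -> R) (t : R) : R :=
  (-1) ^ k / 2 ^ k * (Gamma_nat (d / 2) / Gamma_nat (k + d / 2))
  * / (1 - t ^ 2) ^ hm d * g t.

Definition Vd (d : nat) : R := PI ^ (d / 2) / Gamma_nat (d / 2 + 1).

(* "c_k^d = v" : the integral exists and equals v / V_d. *)
Definition ck_is (d k : nat) (v : R) : Prop :=
  exists g : R -> R,
    nth_deriv k (fun t => (1 - t ^ 2) ^ (k + hm d)) g /\
    exists pr : Riemann_integrable
                  (fun t => Kbar t * Pkd d k g t * (1 - t ^ 2) ^ hm d) (-1) 1,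
      Vd d * RiemannInt pr = v.

Definition C1 (d k : nat) : R :=
  PI ^ (d / 2) / INR (d / 2) * ((-1) ^ k / 2 ^ k) * / Gamma_nat (k + d / 2).

Definition C2 (q d k : nat) : R :=
  (-1) ^ q * binom (k + hm d) q * (INR (fact (2 * q)) / INR (fact (2 * q - k))).

Definition c0_formula (d : nat) : R :=
  / 2 * C1 d 0 *
  ( / (INR d * 2 ^ (d + 1)) * binom d (d / 2)
    + 2 ^ (d - 1) / (INR d * binom (d - 1) (d / 2))
    - / 2 * sumR 0 (hm d) (fun q => (-1) ^ q * binom (hm d) q * / INR (2 * q + 1))).

Definition c1_formula (d : nat) : R :=
  / 2 * C1 d 1 *
  sumR 1 (1 + hm d) (fun q => C2 q d 1 *
    ( / (2 * INR (2 * q + 1))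
      + / (4 * INR q) * (1 - / 2 ^ (2 * q) * binom (2 * q) q))).

Definition ck_even_formula (d k : nat) : R :=
  / 2 * C1 d k *
  sumR ((k + 1) / 2) (k + hm d) (fun q => C2 q d k *
    ( - / (2 * INR (2 * q - k + 1))
      + / (2 * INR (2 * q - k + 2))
        * (1 - / 2 ^ (2 * q - k + 2) * binom (2 * q - k + 2) ((2 * q - k + 2) / 2)))).

Definition ck_odd_formula (d k : nat) : R :=
  / 2 * C1 d k *
  sumR ((k + 1) / 2) (k + hm d) (fun q => C2 q d k *
    ( / (2 * INR (2 * q - k + 1))
      * (1 - / 2 ^ (2 * q - k + 1) * binom (2 * q - k + 1) ((2 * q - k + 1) / 2)))).

From Pilot Require Import Defs.
From Stdlib Require Import Reals Lra Lia Arith List FunctionalExtensionality.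
From Coquelicot Require Import Coquelicot.
Open Scope R_scope.

(** For even [d >= 2], write [h = (d-2)/2] and [n = k + h].  By Rodrigues'
    formula, [P_{k,d}(t) (1-t^2)^h] is a constant multiple of the [k]-th
    derivative of [(1-t^2)^n], which we expand binomially as
    [sum_q (-1)^q C(n,q) (2q)(2q-1)...(2q-k+1) t^(2q-k)]; the constants
    combine with [V_d] into [C1 d k].  The substitution [t = cos θ] (using
    [acos (cos θ) = θ]) turns the integral against [Kbar] into a combination
    of the moments [∫_0^π (π-θ)(1+cos θ) cos^m θ sin θ dθ / 4π], which one
    integration by parts expresses through the Wallis integrals
    [∫_0^π cos^j = π C(2r,r)/4^r] ([j = 2r]) or [0] ([j] odd).
    For [k >= 1] each term then agrees with the stated closed form up to a
    correction [(-1)^q C(n,q) P(q)] with [P] a polynomial of degree [< n];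
    these sum to zero, being an [n]-th finite difference.  For [k = 0] the
    integrand is [(π-θ)(1+cos θ) sin^(d-1) θ / 4π], computed directly from
    the Wallis integrals of [sin], and the remaining alternating sum is
    itself evaluated as [∫_0^π (1-cos^2)^h sin]. *)

Definition lsum (l : list nat) (f : nat -> R) : R := fold_right Rplus 0 (map f l).

Lemma sumR_lsum a b f : sumR a b f = lsum (seq a (S b - a)) f.
Proof. reflexivity. Qed.

Lemma lsum_cons a l f : lsum (a :: l) f = f a + lsum l f.
Proof. reflexivity. Qed.

Lemma lsum_app l1 l2 f : lsum (l1 ++ l2) f = lsum l1 f + lsum l2 f.
Proof. unfold lsum; induction l1 as [|x l1 IH]; simpl; [lra | rewrite IH; lra]. Qed.

Lemma lsum_ext l f g : (forall q, In q l -> f q = g q) -> lsum l f = lsum l g.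
Proof.
  unfold lsum; induction l as [|x l IH]; simpl; intros H; auto.
  rewrite H, IH; auto.
Qed.

Lemma lsum_plus l f g : lsum l (fun q => f q + g q) = lsum l f + lsum l g.
Proof. unfold lsum; induction l as [|x l IH]; simpl; [lra | rewrite IH; lra]. Qed.

Lemma lsum_scal l c f : lsum l (fun q => c * f q) = c * lsum l f.
Proof. unfold lsum; induction l as [|x l IH]; simpl; [lra | rewrite IH; lra]. Qed.

Lemma lsum_zero l f : (forall q, In q l -> f q = 0) -> lsum l f = 0.
Proof.
  unfold lsum; induction l as [|x l IH]; simpl; intros H; [lra|].
  rewrite H, IH; auto; lra.
Qed.

Lemma lsum_seq_shift a n f : lsum (seq (S a) n) f = lsum (seq a n) (fun q => f (S q)).
Proof. rewrite <- seq_shift; unfold lsum; rewrite map_map; auto. Qed.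

(* The Stdlib binomial theorem is phrased with [sum_f_R0]. *)
Lemma sum_f_R0_lsum f n : sum_f_R0 f n = lsum (seq 0 (S n)) f.
Proof.
  induction n as [|n IH]; [unfold lsum; simpl; lra|].
  rewrite seq_S, lsum_app, <- IH; unfold lsum; simpl; lra.
Qed.

Lemma lsum_drop_zeros n s f : (s <= S n)%nat -> (forall q, (q < s)%nat -> f q = 0) ->
  lsum (seq 0 (S n)) f = lsum (seq s (S n - s)) f.
Proof.
  intros Hs Hf. replace (S n) with (s + (S n - s))%nat at 1 by lia.
  rewrite seq_app, lsum_app, (lsum_zero (seq 0 s)); [simpl; ring|].
  intros q Hq. apply in_seq in Hq. apply Hf; lia.
Qed.

Lemma derivable_lsum l (F dF : nat -> R -> R) x :
  (forall q, In q l -> derivable_pt_lim (F q) x (dF q x)) ->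
  derivable_pt_lim (fun t => lsum l (fun q => F q t)) x (lsum l (fun q => dF q x)).
Proof.
  unfold lsum; induction l as [|a l IH]; intros H; simpl.
  - apply derivable_pt_lim_const.
  - apply (derivable_pt_lim_plus (F a) (fun t => fold_right Rplus 0 (map (fun q => F q t) l)));
      [apply H | apply IH; intros; apply H]; simpl; auto.
Qed.

Lemma binom_le n q : (q <= n)%nat -> binom n q = Binomial.C n q.
Proof. intros H. unfold binom. apply Nat.leb_le in H. rewrite H. auto. Qed.

Lemma binom_gt n q : (n < q)%nat -> binom n q = 0.
Proof. intros H. unfold binom. destruct (Nat.leb_spec q n); [lia | auto]. Qed.

Lemma binom_0 n : binom n 0 = 1.
Proof.
  rewrite binom_le by lia. unfold Binomial.C. rewrite Nat.sub_0_r. simpl.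
  field. apply INR_fact_neq_0.
Qed.

Lemma binom_pascal n q : binom (S n) (S q) = binom n q + binom n (S q).
Proof.
  destruct (lt_eq_lt_dec q n) as [[H|H]|H].
  - rewrite !binom_le by lia. symmetry; apply pascal; auto.
  - subst q. rewrite (binom_gt n (S n)) by lia. rewrite !binom_le by lia.
    unfold Binomial.C. rewrite !Nat.sub_diag, Rplus_0_r.
    field; repeat split; apply INR_fact_neq_0.
  - rewrite !binom_gt by lia. ring.
Qed.

(** Falling factorial [x (x-1) ... (x-j+1)]: the coefficient produced by
    differentiating [t^x] [j] times. *)
Fixpoint falling (x : R) (j : nat) : R :=
  match j with O => 1 | S j => falling x j * (x - INR j) end.

Lemma falling_zero m j : (m < j)%nat -> falling (INR m) j = 0.
Proof.
  induction j as [|j IH]; intros H; [lia|]. simpl.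
  destruct (Nat.eq_dec m j) as [->|Hn]; [lra|].
  rewrite IH by lia; lra.
Qed.

Lemma falling_fact m j : (j <= m)%nat -> falling (INR m) j = INR (fact m) / INR (fact (m - j)).
Proof.
  induction j as [|j IH]; intros H; simpl.
  - rewrite Nat.sub_0_r; field; apply INR_fact_neq_0.
  - rewrite IH by lia.
    replace (m - j)%nat with (S (m - S j)) by lia.
    rewrite fact_simpl, mult_INR, <- minus_INR by lia.
    replace (S (m - S j)) with (m - j)%nat by lia.
    field; split; [apply INR_fact_neq_0 | apply not_0_INR; lia].
Qed.

(** The [k]-th derivative of [(1-t^2)^n], expanded:
    [rodrigues n k t = sum_q rcoef n k q * t^(2q-k)]. *)
Definition rcoef (n k q : nat) : R := (-1) ^ q * binom n q * falling (INR (2 * q)) k.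

Definition rodrigues (n k : nat) (t : R) : R :=
  lsum (seq 0 (S n)) (fun q => rcoef n k q * t ^ (2 * q - k)).

Lemma rodrigues_0 n t : rodrigues n 0 t = (1 - t ^ 2) ^ n.
Proof.
  replace (1 - t ^ 2) with (- t ^ 2 + 1) by ring.
  rewrite binomial, sum_f_R0_lsum. unfold rodrigues, rcoef. apply lsum_ext; intros q Hq.
  apply in_seq in Hq. rewrite binom_le, pow1, Nat.sub_0_r by lia. simpl falling.
  replace (- t ^ 2) with ((-1) * t ^ 2) by ring. rewrite Rpow_mult_distr, <- pow_mult. ring.
Qed.

(* Differentiating [rodrigues n k] termwise gives [rodrigues n (k+1)]; terms with
   [2q < k] stay zero since their falling factorial vanishes. *)
Lemma rodrigues_derive n k x : derivable_pt_lim (rodrigues n k) x (rodrigues n (S k) x).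
Proof.
  apply (derivable_lsum _ (fun q t => rcoef n k q * t ^ (2 * q - k))
                          (fun q t => rcoef n (S k) q * t ^ (2 * q - S k))).
  intros q _. unfold rcoef.
  set (c := (-1) ^ q * binom n q).
  replace (c * falling (INR (2 * q)) (S k) * x ^ (2 * q - S k))
    with (c * falling (INR (2 * q)) k * (INR (2 * q - k) * x ^ Nat.pred (2 * q - k))).
  - apply derivable_pt_lim_scal, derivable_pt_lim_pow.
  - change (falling (INR (2 * q)) (S k)) with (falling (INR (2 * q)) k * (INR (2 * q) - INR k)).
    destruct (le_lt_dec k (2 * q)) as [Hk|Hk].
    + rewrite minus_INR by lia. replace (Nat.pred (2 * q - k)) with (2 * q - S k)%nat by lia. ring.
    + rewrite falling_zero by lia. ring.
Qed.

Lemma rodrigues_continuous n k x : continuity_pt (rodrigues n k) x.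
Proof.
  apply derivable_continuous_pt. exists (rodrigues n (S k) x). apply rodrigues_derive.
Qed.

Lemma nth_deriv_rodrigues n k : nth_deriv k (fun t => (1 - t ^ 2) ^ n) (rodrigues n k).
Proof.
  induction k as [|k IH].
  - replace (fun t => (1 - t ^ 2) ^ n) with (rodrigues n 0); [constructor|].
    apply functional_extensionality; apply rodrigues_0.
  - econstructor; [apply IH | intros; apply rodrigues_derive].
Qed.

Lemma is_RInt_scal_R (f : R -> R) (a b c v : R) :
  is_RInt f a b v -> is_RInt (fun x => c * f x) a b (c * v).
Proof. exact (is_RInt_scal f a b c v). Qed.

Lemma is_RInt_lin (f g : R -> R) (a b If Ig al be : R) :
  is_RInt f a b If -> is_RInt g a b Ig ->
  is_RInt (fun x => al * f x + be * g x) a b (al * If + be * Ig).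
Proof.
  intros Hf Hg. exact (is_RInt_plus _ _ _ _ _ _ (is_RInt_scal_R _ _ _ al _ Hf) (is_RInt_scal_R _ _ _ be _ Hg)).
Qed.

Lemma is_RInt_eq_val (f : R -> R) a b (v1 v2 : R) : is_RInt f a b v1 -> v1 = v2 -> is_RInt f a b v2.
Proof. intros H ->; auto. Qed.

Lemma is_RInt_zero a b : is_RInt (fun _ => 0) a b 0.
Proof.
  apply (is_RInt_eq_val _ _ _ (scal (b - a) 0)); [exact (is_RInt_const (V := R_NormedModule) a b 0)|].
  unfold scal; simpl; unfold mult; simpl; ring.
Qed.

Lemma is_RInt_lsum l (F : nat -> R -> R) a b (v : nat -> R) :
  (forall q, In q l -> is_RInt (F q) a b (v q)) ->
  is_RInt (fun x => lsum l (fun q => F q x)) a b (lsum l v).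
Proof.
  unfold lsum; induction l as [|q l IH]; intros H; simpl; [apply is_RInt_zero|].
  exact (is_RInt_plus _ _ _ _ _ _ (H q (or_introl eq_refl)) (IH (fun p Hp => H p (or_intror Hp)))).
Qed.

Lemma is_RInt_ftc (F f : R -> R) a b :
  (forall x, is_derive F x (f x)) -> (forall x, continuous f x) ->
  is_RInt f a b (F b - F a).
Proof. intros HF Hf. exact (is_RInt_derive F f a b (fun x _ => HF x) (fun x _ => Hf x)). Qed.

Lemma is_RInt_ext_R (f g : R -> R) (a b l : R) :
  (forall x, Rmin a b < x < Rmax a b -> f x = g x) -> is_RInt f a b l -> is_RInt g a b l.
Proof. exact (is_RInt_ext f g a b l). Qed.

Lemma is_RInt_ext_all (f g : R -> R) (a b l : R) :
  (forall x, f x = g x) -> is_RInt f a b l -> is_RInt g a b l.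
Proof. intros H1. apply is_RInt_ext_R. intros x _. apply H1. Qed.

Lemma is_RInt_same (f : R -> R) a b (v1 v2 : R) : is_RInt f a b v1 -> is_RInt f a b v2 -> v1 = v2.
Proof. intros H1 H2. rewrite <- (is_RInt_unique _ _ _ _ H1). exact (is_RInt_unique _ _ _ _ H2). Qed.

(* [auto_derive] writes the derivative of [x^(S j)] with [INR (S j)] unfolded. *)
Ltac fold_INR_S :=
  repeat match goal with |- context [match ?j with 0%nat => 1 | S _ => INR ?j + 1 end] =>
    replace (match j with 0%nat => 1 | S _ => INR j + 1 end) with (INR (S j)) by (destruct j; simpl; lra) end.

Ltac continuity_by_derive :=
  match goal with |- continuous ?f ?x => apply (ex_derive_continuous f); auto_derive; auto end.

Lemma sin_sqr x : sin x * sin x = 1 - cos x * cos x.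
Proof. generalize (sin2_cos2 x); unfold Rsqr; lra. Qed.

Definition wcos (j : nat) : R := RInt (fun t => cos t ^ j) 0 PI.
Definition wsin (j : nat) : R := RInt (fun t => sin t ^ j) 0 PI.

Lemma wcos_is j : is_RInt (fun t => cos t ^ j) 0 PI (wcos j).
Proof. apply (RInt_correct (fun t => cos t ^ j)), ex_RInt_continuous; intros; continuity_by_derive. Qed.

Lemma wsin_is j : is_RInt (fun t => sin t ^ j) 0 PI (wsin j).
Proof. apply (RInt_correct (fun t => sin t ^ j)), ex_RInt_continuous; intros; continuity_by_derive. Qed.

(* Reduction formula, from differentiating [cos^(j+1) * sin]. *)
Lemma wcos_rec j : (INR j + 2) * wcos (j + 2) = (INR j + 1) * wcos j.
Proof.
  set (F := fun t => cos t ^ S j * sin t).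
  assert (Hprim : is_RInt (fun t => (INR j + 2) * cos t ^ (j + 2) + (- (INR j + 1)) * cos t ^ j) 0 PI 0).
  { apply (is_RInt_eq_val _ _ _ (F PI - F 0)); [apply is_RInt_ftc; intros x; unfold F|].
    - auto_derive; auto. fold_INR_S. rewrite S_INR, pow_add.
      replace (1 * - sin x * ((INR j + 1) * cos x ^ j) * sin x)
        with (- (INR j + 1) * cos x ^ j * (sin x * sin x)) by ring.
      rewrite sin_sqr. ring.
    - continuity_by_derive.
    - unfold F. rewrite sin_0, sin_PI. ring. }
  generalize (is_RInt_same _ _ _ _ _
    (is_RInt_lin _ _ 0 PI _ _ (INR j + 2) (- (INR j + 1)) (wcos_is (j + 2)) (wcos_is j)) Hprim).
  lra.
Qed.

(* Reduction formula, from differentiating [sin^(j+1) * cos]. *)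
Lemma wsin_rec j : (INR j + 2) * wsin (j + 2) = (INR j + 1) * wsin j.
Proof.
  set (F := fun t => sin t ^ S j * cos t).
  assert (Hprim : is_RInt (fun t => (INR j + 1) * sin t ^ j + (- (INR j + 2)) * sin t ^ (j + 2)) 0 PI 0).
  { apply (is_RInt_eq_val _ _ _ (F PI - F 0)); [apply is_RInt_ftc; intros x; unfold F|].
    - auto_derive; auto. fold_INR_S. rewrite S_INR, pow_add.
      replace (1 * cos x * ((INR j + 1) * sin x ^ j) * cos x)
        with ((INR j + 1) * sin x ^ j * (cos x * cos x)) by ring.
      replace (cos x * cos x) with (1 - sin x * sin x) by (rewrite sin_sqr; ring). ring.
    - continuity_by_derive.
    - unfold F. rewrite sin_0, sin_PI. simpl. ring. }
  generalize (is_RInt_same _ _ _ _ _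
    (is_RInt_lin _ _ 0 PI _ _ (INR j + 1) (- (INR j + 2)) (wsin_is j) (wsin_is (j + 2))) Hprim).
  lra.
Qed.

Lemma wcos_0 : wcos 0 = PI.
Proof.
  apply (is_RInt_same _ 0 PI _ _ (wcos_is 0)), (is_RInt_eq_val _ _ _ (PI - 0)); [|ring].
  apply (is_RInt_ftc (fun t => t)); intros x; [auto_derive; auto | continuity_by_derive].
Qed.

Lemma wsin_0 : wsin 0 = PI.
Proof.
  apply (is_RInt_same _ 0 PI _ _ (wsin_is 0)), (is_RInt_eq_val _ _ _ (PI - 0)); [|ring].
  apply (is_RInt_ftc (fun t => t)); intros x; [auto_derive; auto | continuity_by_derive].
Qed.

Lemma wcos_1 : wcos 1 = 0.
Proof.
  apply (is_RInt_same _ 0 PI _ _ (wcos_is 1)), (is_RInt_eq_val _ _ _ (sin PI - sin 0));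
    [|rewrite sin_0, sin_PI; ring].
  apply (is_RInt_ftc sin); intros x; [auto_derive; auto; ring | continuity_by_derive].
Qed.

Lemma wsin_1 : wsin 1 = 2.
Proof.
  apply (is_RInt_same _ 0 PI _ _ (wsin_is 1)), (is_RInt_eq_val _ _ _ (- cos PI - - cos 0));
    [|rewrite cos_0, cos_PI; ring].
  apply (is_RInt_ftc (fun t => - cos t)); intros x; [auto_derive; auto; ring | continuity_by_derive].
Qed.

Definition central (r : nat) : R := Binomial.C (2 * r) r / 2 ^ (2 * r).

Lemma central_0 : central 0 = 1.
Proof. unfold central, Binomial.C; simpl; field. Qed.

Lemma central_S r : central (S r) = central r * (2 * INR r + 1) / (2 * INR r + 2).
Proof.
  unfold central, Binomial.C.
  replace (2 * S r)%nat with (S (S (2 * r))) by lia.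
  replace (S (S (2 * r)) - S r)%nat with (S r) by lia.
  replace (2 * r - r)%nat with r by lia.
  rewrite !fact_simpl, !mult_INR, !S_INR, mult_INR.
  replace (2 ^ S (S (2 * r))) with (4 * 2 ^ (2 * r)) by (simpl; ring).
  simpl INR.
  assert (INR (fact r) <> 0) by apply INR_fact_neq_0.
  assert (INR (fact (2 * r)) <> 0) by apply INR_fact_neq_0.
  assert (0 <= INR r) by apply pos_INR.
  assert (2 ^ (2 * r) <> 0) by (apply pow_nonzero; lra).
  field. repeat split; auto; lra.
Qed.

Lemma central_pos r : 0 < central r.
Proof.
  induction r as [|r IH]; [rewrite central_0; lra|].
  rewrite central_S. assert (0 <= INR r) by apply pos_INR.
  apply Rmult_lt_0_compat; [apply Rmult_lt_0_compat; lra | apply Rinv_0_lt_compat; lra].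
Qed.

Lemma binom_central r : binom (2 * r) r = central r * 2 ^ (2 * r).
Proof.
  rewrite binom_le by lia. unfold central. field. apply pow_nonzero. lra.
Qed.

Lemma central_binom r : / 2 ^ (2 * r) * binom (2 * r) r = central r.
Proof. rewrite binom_central. field. apply pow_nonzero. lra. Qed.

Lemma solve_linear a x b : a * x = b -> a <> 0 -> x = b / a.
Proof. intros H Ha. rewrite <- H. field. exact Ha. Qed.

Lemma wcos_even r : wcos (2 * r) = PI * central r.
Proof.
  induction r as [|r IH]; [rewrite Nat.mul_0_r, wcos_0, central_0; ring|].
  assert (H := wcos_rec (2 * r)).
  replace (2 * r + 2)%nat with (2 * S r)%nat in H by lia.
  rewrite IH, mult_INR in H. simpl INR in H. rewrite central_S.
  assert (0 <= INR r) by apply pos_INR.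
  rewrite (solve_linear _ _ _ H) by lra. field. lra.
Qed.

Lemma wcos_odd r : wcos (2 * r + 1) = 0.
Proof.
  induction r as [|r IH]; [apply wcos_1|].
  assert (H := wcos_rec (2 * r + 1)).
  replace (2 * r + 1 + 2)%nat with (2 * S r + 1)%nat in H by lia.
  rewrite IH in H. assert (0 <= INR (2 * r + 1)) by apply pos_INR.
  apply (Rmult_eq_reg_l (INR (2 * r + 1) + 2)); lra.
Qed.

Lemma wsin_even r : wsin (2 * r) = PI * central r.
Proof.
  induction r as [|r IH]; [rewrite Nat.mul_0_r, wsin_0, central_0; ring|].
  assert (H := wsin_rec (2 * r)).
  replace (2 * r + 2)%nat with (2 * S r)%nat in H by lia.
  rewrite IH, mult_INR in H. simpl INR in H. rewrite central_S.
  assert (0 <= INR r) by apply pos_INR.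
  rewrite (solve_linear _ _ _ H) by lra. field. lra.
Qed.

Lemma wsin_odd r : wsin (2 * r + 1) = 2 / ((2 * INR r + 1) * central r).
Proof.
  induction r as [|r IH]; [simpl; rewrite wsin_1, central_0; field|].
  assert (H := wsin_rec (2 * r + 1)).
  replace (2 * r + 1 + 2)%nat with (2 * S r + 1)%nat in H by lia.
  rewrite IH, plus_INR, mult_INR in H. simpl INR in H. rewrite central_S, S_INR.
  assert (0 <= INR r) by apply pos_INR. assert (0 < central r) by apply central_pos.
  rewrite (solve_linear _ _ _ H) by lra. field. repeat split; lra.
Qed.

(** After the substitution [t = cos θ] the kernel becomes [Kbar (cos θ)]
    = [(cos θ + 1)(PI - θ) / (4 PI)] on [0, PI]. *)
Definition theta_kernel (t : R) : R := / (4 * PI) * (cos t + 1) * (PI - t).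

(** Moments [moment m = ∫_0^PI theta_kernel θ cos^m θ sin θ dθ], in closed form
    through Wallis integrals (see [moment_is]). *)
Definition moment (m : nat) : R :=
  / (4 * PI) * (PI * (/ (INR m + 2) + / (INR m + 1))
                - wcos (S (S m)) / (INR m + 2) - wcos (S m) / (INR m + 1)).

(* Integration by parts against the primitive [-(cos^(m+2)/(m+2) + cos^(m+1)/(m+1))]. *)
Lemma moment_is m : is_RInt (fun t => theta_kernel t * cos t ^ m * sin t) 0 PI (moment m).
Proof.
  assert (Ha : INR m + 2 <> 0) by (generalize (pos_INR m); lra).
  assert (Hb : INR m + 1 <> 0) by (generalize (pos_INR m); lra).
  set (G := fun t => / (INR m + 2) * cos t ^ (S (S m)) + / (INR m + 1) * cos t ^ (S m)).
  set (F := fun t => - (PI - t) * G t).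
  set (dF := fun t => G t + (PI - t) * (cos t ^ (S m) + cos t ^ m) * sin t).
  assert (I1 : is_RInt dF 0 PI (PI * (/ (INR m + 2) + / (INR m + 1)))).
  { apply (is_RInt_eq_val _ _ _ (F PI - F 0)).
    - apply is_RInt_ftc; intros x; unfold F, dF, G.
      + auto_derive; auto. fold_INR_S. rewrite !S_INR. repeat rewrite <- tech_pow_Rmult. field. auto.
      + continuity_by_derive.
    - unfold F, G. rewrite cos_0, !pow1. ring. }
  assert (I2 : is_RInt G 0 PI (/ (INR m + 2) * wcos (S (S m)) + / (INR m + 1) * wcos (S m)))
    by (apply is_RInt_lin; apply wcos_is).
  assert (I3 := is_RInt_scal_R _ _ _ (/ (4 * PI)) _ (is_RInt_lin _ _ _ _ _ _ 1 (-1) I1 I2)).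
  eapply is_RInt_eq_val.
  - eapply is_RInt_ext_all; [|exact I3].
    intros x. unfold dF, theta_kernel. cbv beta. repeat rewrite <- tech_pow_Rmult. ring.
  - unfold moment, Rdiv. ring.
Qed.

Lemma moment_even r :
  moment (2 * r) = / 2 * (/ (2 * (2 * INR r + 1)) + / (2 * (2 * INR r + 2)) * (1 - central (S r))).
Proof.
  unfold moment. replace (S (S (2 * r))) with (2 * S r)%nat by lia.
  replace (S (2 * r)) with (2 * r + 1)%nat by lia.
  rewrite wcos_even, wcos_odd, mult_INR. simpl (INR 2).
  assert (0 <= INR r) by apply pos_INR. assert (PI > 0) by apply PI_RGT_0.
  field. repeat split; lra.
Qed.

Lemma moment_odd r :
  moment (2 * r + 1) = / 2 * (/ (2 * (2 * INR r + 3)) + / (2 * (2 * INR r + 2)) * (1 - central (S r))).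
Proof.
  unfold moment. replace (S (S (2 * r + 1))) with (2 * S r + 1)%nat by lia.
  replace (S (2 * r + 1)) with (2 * S r)%nat by lia.
  rewrite wcos_even, wcos_odd, plus_INR, mult_INR. simpl (INR 2). simpl (INR 1).
  assert (0 <= INR r) by apply pos_INR. assert (PI > 0) by apply PI_RGT_0.
  field. repeat split; lra.
Qed.

(** Continuity of [acos] on [-1, 1]: Stdlib only provides it in the interior.
    At [1]: [acos] is decreasing and [acos (cos e) = e], so [acos x < e]
    as soon as [cos e < x]. *)
Lemma acos_continuous_at_1 : continuity_pt acos 1.
Proof.
  intros eps Heps.
  set (e := Rmin eps (PI / 2)).
  assert (He : 0 < e) by (unfold e; apply Rmin_glb_lt; [lra | generalize PI_RGT_0; lra]).
  assert (He2 : e <= PI / 2) by apply Rmin_r.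
  assert (He3 : e <= eps) by apply Rmin_l.
  assert (Hc : cos e < 1) by (rewrite <- cos_0; apply cos_decreasing_1; generalize PI_RGT_0; lra).
  assert (Hc0 : 0 <= cos e) by (apply cos_ge_0; generalize PI_RGT_0; lra).
  exists (1 - cos e). split; [lra|].
  intros x [_ Hx]. simpl in *. unfold Rdist in *. rewrite acos_1, Rminus_0_r.
  assert (Hb := acos_bound x). rewrite Rabs_pos_eq by lra.
  destruct (Rle_dec 1 x) as [H1|H1].
  - unfold acos. destruct (Rle_dec x (-1)); [lra|]. destruct (Rle_dec 1 x); lra.
  - assert (Hx1 : cos e < x) by (apply Rabs_def2 in Hx; lra).
    destruct (Rlt_or_le (acos x) e) as [Hl|Hl]; [lra|]. exfalso.
    assert (Hle : cos (acos x) <= cos e).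
    { destruct (Req_dec (acos x) e) as [Heq|Hne]; [rewrite Heq; lra|].
      left. apply cos_decreasing_1; generalize PI_RGT_0; lra. }
    rewrite cos_acos in Hle by lra. lra.
Qed.

(* At [-1], by the symmetry [acos (-x) = PI - acos x]. *)
Lemma acos_continuous_at_m1 : continuity_pt acos (-1).
Proof.
  apply (continuity_pt_ext (fun x => PI - acos (- x))); [intros x; rewrite acos_opp; ring|].
  apply (continuity_pt_minus (fun _ => PI) (fun x => acos (- x))).
  - apply continuity_pt_const. intros a b; auto.
  - apply (continuity_pt_comp (fun x => - x) acos).
    + apply (continuity_pt_opp id), continuity_pt_id.
    + replace (- -1) with 1 by ring. apply acos_continuous_at_1.
Qed.

Lemma acos_continuous x : -1 <= x <= 1 -> continuity_pt acos x.
Proof.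
  intros H. destruct (Req_dec x 1) as [->|H1]; [apply acos_continuous_at_1|].
  destruct (Req_dec x (-1)) as [->|H2]; [apply acos_continuous_at_m1|].
  apply derivable_continuous_pt, derivable_pt_acos. lra.
Qed.

Lemma Kbar_continuous x : -1 <= x <= 1 -> continuity_pt Kbar x.
Proof.
  intros H. unfold Kbar. apply continuity_pt_mult.
  - apply continuity_pt_mult; [apply continuity_pt_const; intros a b; auto|].
    apply (continuity_pt_plus id (fun _ => 1));
      [apply continuity_pt_id | apply continuity_pt_const; intros a b; auto].
  - apply (continuity_pt_minus (fun _ => PI) acos);
      [apply continuity_pt_const; intros a b; auto | apply acos_continuous; auto].
Qed.

Lemma cos_substitution (P : R -> R) (v : R) :
  (forall x, continuity_pt P x) ->
  is_RInt (fun t => theta_kernel t * P (cos t) * sin t) 0 PI v ->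
  is_RInt (fun t => Kbar t * P t) (-1) 1 v.
Proof.
  intros HP Hv. set (f := fun t => Kbar t * P t).
  assert (Hf : forall x, -1 <= x <= 1 -> continuous f x).
  { intros x Hx. apply continuity_pt_filterlim, continuity_pt_mult; [apply Kbar_continuous; auto | apply HP]. }
  assert (Hpi : Rmin 0 PI = 0 /\ Rmax 0 PI = PI)
    by (generalize PI_RGT_0; split; [apply Rmin_left | apply Rmax_right]; lra).
  assert (Hcomp : is_RInt (fun y => scal (- sin y) (f (cos y))) 0 PI (RInt f 1 (-1))).
  { rewrite <- cos_0, <- cos_PI. apply (is_RInt_comp (V := R_CompleteNormedModule)).
    - intros x _. apply Hf. split; apply COS_bound.
    - intros x _. split; [auto_derive; auto; ring | continuity_by_derive]. }
  assert (Hneg : is_RInt (fun y => scal (- sin y) (f (cos y))) 0 PI (- v)).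
  { apply (is_RInt_ext (fun y => - (theta_kernel y * P (cos y) * sin y))).
    - destruct Hpi as [-> ->]. intros x Hx. unfold f, Kbar, theta_kernel.
      rewrite acos_cos by lra. unfold scal; simpl; unfold mult; simpl. ring.
    - exact (is_RInt_opp _ _ _ _ Hv). }
  assert (Hex : ex_RInt f (-1) 1).
  { apply (ex_RInt_continuous (V := R_CompleteNormedModule)). intros z Hz. apply Hf.
    rewrite Rmin_left, Rmax_right in Hz by lra. exact Hz. }
  apply (is_RInt_eq_val _ _ _ _ _ (RInt_correct _ _ _ Hex)).
  rewrite <- (opp_RInt_swap f 1 (-1)) by (apply ex_RInt_swap; exact Hex).
  rewrite (is_RInt_same _ _ _ _ _ Hcomp Hneg). unfold opp; simpl. ring.
Qed.

Lemma even_dim d : Nat.Even d -> (2 <= d)%nat ->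
  exists m : nat, (d = 2 * S m /\ d / 2 = S m /\ hm d = m)%nat.
Proof.
  intros [m Hm] Hd. subst d. destruct m as [|m]; [lia|]. exists m. unfold hm.
  split; [auto | split].
  - rewrite Nat.mul_comm, Nat.div_mul; lia.
  - replace (2 * S m - 2)%nat with (m * 2)%nat by lia. rewrite Nat.div_mul; lia.
Qed.

(* [V_d] times the Rodrigues prefactor is [C1 d k], since [V_d Γ(d/2) = π^{d/2} / (d/2)].
   ([C1] is qualified because Coquelicot also exports a [C1].) *)
Lemma C1_factor d k : Nat.Even d -> (2 <= d)%nat ->
  Vd d * ((-1) ^ k / 2 ^ k * (Gamma_nat (d / 2)%nat / Gamma_nat (k + d / 2)%nat)) = Defs.C1 d k.
Proof.
  intros He Hd. destruct (even_dim d He Hd) as [m [_ [Hm _]]].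
  unfold Vd, Defs.C1, Gamma_nat. rewrite Hm.
  replace (S m + 1 - 1)%nat with (S m) by lia. replace (S m - 1)%nat with m by lia.
  rewrite fact_simpl, mult_INR.
  assert (INR (fact m) <> 0) by apply INR_fact_neq_0.
  assert (INR (fact (k + S m - 1)) <> 0) by apply INR_fact_neq_0.
  assert (INR (S m) <> 0) by (apply not_0_INR; lia).
  assert (2 ^ k <> 0) by (apply pow_nonzero; lra).
  field. auto.
Qed.

(* On (-1,1) the weight [(1-t^2)^((d-2)/2)] cancels the denominator of [Pkd], so
   [c_k^d] is [C1 d k] times the integral of [Kbar] against the [k]-th derivative. *)
Lemma ck_of_integral (d k : nat) (v : R) : Nat.Even d -> (2 <= d)%nat ->
  is_RInt (fun t => Kbar t * rodrigues (k + hm d) k t) (-1) 1 v ->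
  ck_is d k (Defs.C1 d k * v).
Proof.
  intros He Hd Hv. exists (rodrigues (k + hm d) k). split; [apply nth_deriv_rodrigues|].
  rewrite <- C1_factor by auto.
  set (c := (-1) ^ k / 2 ^ k * (Gamma_nat (d / 2)%nat / Gamma_nat (k + d / 2)%nat)).
  assert (Hw : is_RInt (fun t => Kbar t * Pkd d k (rodrigues (k + hm d) k) t * (1 - t ^ 2) ^ hm d)
                 (-1) 1 (c * v)).
  { apply (is_RInt_ext_R (fun t => c * (Kbar t * rodrigues (k + hm d) k t)));
      [|apply is_RInt_scal_R; auto].
    rewrite Rmin_left, Rmax_right by lra. intros x Hx.
    assert ((1 - x ^ 2) ^ hm d <> 0) by (apply pow_nonzero; nra).
    unfold Pkd. fold c. field. auto. }
  exists (ex_RInt_Reals_0 _ _ _ (ex_intro _ _ Hw)).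
  rewrite <- RInt_Reals, (is_RInt_unique _ _ _ _ Hw). ring.
Qed.

Lemma ck_of_theta_integral (d k : nat) (v : R) : Nat.Even d -> (2 <= d)%nat ->
  is_RInt (fun t => theta_kernel t * rodrigues (k + hm d) k (cos t) * sin t) 0 PI v ->
  ck_is d k (Defs.C1 d k * v).
Proof.
  intros He Hd Hv. apply ck_of_integral; auto.
  apply cos_substitution; [apply rodrigues_continuous | exact Hv].
Qed.

Lemma theta_integral_moments n k :
  is_RInt (fun t => theta_kernel t * rodrigues n k (cos t) * sin t) 0 PI
    (lsum (seq 0 (S n)) (fun q => rcoef n k q * moment (2 * q - k))).
Proof.
  eapply is_RInt_ext_all;
    [|apply (is_RInt_lsum _ (fun q t => rcoef n k q * (theta_kernel t * cos t ^ (2 * q - k) * sin t)))].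
  - intros x. unfold rodrigues.
    rewrite <- (lsum_scal _ (theta_kernel x)), Rmult_comm, <- lsum_scal.
    apply lsum_ext. intros q _. ring.
  - intros q _. apply is_RInt_scal_R, moment_is.
Qed.

Lemma ck_moment_sum d k : Nat.Even d -> (2 <= d)%nat ->
  ck_is d k (Defs.C1 d k * lsum (seq 0 (S (k + hm d)))
                           (fun q => rcoef (k + hm d) k q * moment (2 * q - k))).
Proof. intros He Hd. apply ck_of_theta_integral, theta_integral_moments; auto. Qed.

Lemma ck_is_eq (d k : nat) (v1 v2 : R) : ck_is d k v1 -> v1 = v2 -> ck_is d k v2.
Proof. intros H ->; auto. Qed.

(** Alternating binomial sums [sum_{q=0}^n (-1)^q C(n,q) f(q)]: up to sign this is
    the [n]-th forward difference of [f] at [0], so it vanishes when [f] is a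
    polynomial of degree [< n]. *)
Definition alt_sum (n : nat) (f : nat -> R) : R :=
  lsum (seq 0 (S n)) (fun q => (-1) ^ q * binom n q * f q).

Definition fdiff (f : nat -> R) (q : nat) : R := f (S q) - f q.

(* The range may be extended by one, as [binom n (n+1) = 0]. *)
Lemma alt_sum_extend n f : alt_sum n f = lsum (seq 0 (S (S n))) (fun q => (-1) ^ q * binom n q * f q).
Proof.
  unfold alt_sum. rewrite (seq_S (S n) 0), lsum_app. simpl (0 + S n)%nat.
  unfold lsum at 3. simpl. rewrite binom_gt by lia. ring.
Qed.

(* Pascal's rule, summed. *)
Lemma alt_sum_S n f : alt_sum (S n) f = - alt_sum n (fdiff f).
Proof.
  assert (Hhigh : lsum (seq 0 (S n)) (fun q => (-1) ^ S q * binom n (S q) * f (S q)) = alt_sum n f - f 0%nat).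
  { rewrite alt_sum_extend. change (seq 0 (S (S n))) with (0%nat :: seq 1 (S n)).
    rewrite lsum_cons, (lsum_seq_shift 0), binom_0. simpl pow. ring. }
  unfold alt_sum at 1. change (seq 0 (S (S n))) with (0%nat :: seq 1 (S n)).
  rewrite lsum_cons, lsum_seq_shift.
  rewrite (lsum_ext _ _ (fun q => -1 * ((-1) ^ q * binom n q * f (S q)) + (-1) ^ S q * binom n (S q) * f (S q)))
    by (intros q _; rewrite binom_pascal; simpl pow; ring).
  rewrite lsum_plus, lsum_scal, Hhigh, binom_0.
  assert (Hdiff : alt_sum n (fdiff f)
      = lsum (seq 0 (S n)) (fun q => (-1) ^ q * binom n q * f (S q)) + -1 * alt_sum n f).
  { unfold alt_sum, fdiff. rewrite <- lsum_scal, <- lsum_plus. apply lsum_ext; intros; ring. }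
  rewrite Hdiff. simpl pow. ring.
Qed.

(** [deg_le j f]: the sequence [f] is polynomial of degree at most [j] in [q],
    i.e. its [(j+1)]-th forward difference vanishes. *)
Fixpoint deg_le (j : nat) (f : nat -> R) : Prop :=
  match j with
  | O => forall q, f (S q) = f q
  | S j => deg_le j (fdiff f)
  end.

Lemma deg_le_ext j : forall f g, (forall q, f q = g q) -> deg_le j f -> deg_le j g.
Proof.
  induction j as [|j IH]; simpl; intros f g H Hf.
  - intros q; rewrite <- !H; auto.
  - apply (IH (fdiff f)); auto. intros q; unfold fdiff; rewrite !H; auto.
Qed.

Lemma deg_le_lin j : forall f g a b, deg_le j f -> deg_le j g -> deg_le j (fun q => a * f q + b * g q).
Proof.
  induction j as [|j IH]; simpl; intros f g a b Hf Hg.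
  - intros q; rewrite Hf, Hg; auto.
  - apply (deg_le_ext j (fun q => a * fdiff f q + b * fdiff g q)); [intros; unfold fdiff; ring|].
    apply IH; auto.
Qed.

Lemma deg_le_0_const f : deg_le 0 f -> forall q, f q = f 0%nat.
Proof. simpl; intros H q; induction q as [|q IH]; auto. rewrite H; auto. Qed.

Lemma deg_le_mul_affine j : forall f a b, deg_le j f -> deg_le (S j) (fun q => f q * (a * INR q + b)).
Proof.
  induction j as [|j IH]; intros f a b Hf.
  - simpl. intros q. unfold fdiff. rewrite !S_INR, !(deg_le_0_const f Hf (S _)), (deg_le_0_const f Hf q). ring.
  - change (deg_le (S j) (fdiff (fun q => f q * (a * INR q + b)))).
    apply (deg_le_ext (S j) (fun q => 1 * (fdiff f q * (a * INR q + (a + b))) + a * f q)).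
    { intros q. unfold fdiff. rewrite S_INR. ring. }
    apply deg_le_lin; [apply IH; exact Hf | exact Hf].
Qed.

Lemma falling_deg_le j : deg_le j (fun q => falling (INR (2 * q)) j).
Proof.
  induction j as [|j IH]; [simpl; auto|].
  apply (deg_le_ext (S j) (fun q => falling (INR (2 * q)) j * (2 * INR q + - INR j))).
  - intros q. change (falling (INR (2 * q)) (S j)) with (falling (INR (2 * q)) j * (INR (2 * q) - INR j)).
    rewrite mult_INR. simpl (INR 2). ring.
  - apply deg_le_mul_affine, IH.
Qed.

Lemma alt_sum_deg_vanish n : forall j f, deg_le j f -> (j < n)%nat -> alt_sum n f = 0.
Proof.
  induction n as [|n IH]; intros j f Hf Hj; [lia|].
  rewrite alt_sum_S. destruct j as [|j].
  - unfold alt_sum. rewrite lsum_zero; [ring|]. intros q _. unfold fdiff. simpl in Hf. rewrite Hf. ring.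
  - rewrite (IH j); [ring | exact Hf | lia].
Qed.

Lemma alt_sum_tail_vanish n s j P : deg_le j P -> (j < n)%nat -> (s <= S n)%nat ->
  (forall q, (q < s)%nat -> P q = 0) ->
  lsum (seq s (S n - s)) (fun q => (-1) ^ q * binom n q * P q) = 0.
Proof.
  intros HP Hj Hs Hz. rewrite <- lsum_drop_zeros; auto.
  - exact (alt_sum_deg_vanish n j P HP Hj).
  - intros q Hq. rewrite Hz by exact Hq. ring.
Qed.

(** The brackets of the closed forms for [k >= 2], as functions of [m = 2q - k]. *)
Definition even_bracket (m : nat) : R :=
  - / (2 * INR (m + 1)) + / (2 * INR (m + 2)) * (1 - / 2 ^ (m + 2) * binom (m + 2) ((m + 2) / 2)).

Definition odd_bracket (m : nat) : R :=
  / (2 * INR (m + 1)) * (1 - / 2 ^ (m + 1) * binom (m + 1) ((m + 1) / 2)).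

Lemma ck_even_formula_bracket d k :
  ck_even_formula d k
  = / 2 * Defs.C1 d k * sumR ((k + 1) / 2) (k + hm d) (fun q => C2 q d k * even_bracket (2 * q - k)).
Proof. reflexivity. Qed.

Lemma ck_odd_formula_bracket d k :
  ck_odd_formula d k
  = / 2 * Defs.C1 d k * sumR ((k + 1) / 2) (k + hm d) (fun q => C2 q d k * odd_bracket (2 * q - k)).
Proof. reflexivity. Qed.

Lemma C2_rcoef q d k : (k <= 2 * q)%nat -> C2 q d k = rcoef (k + hm d) k q.
Proof. intros H. unfold C2, rcoef. rewrite falling_fact by exact H. reflexivity. Qed.

Lemma moment_even_split m : Nat.Even m ->
  INR (m + 1) * moment m = / 2 * (INR (m + 1) * even_bracket m) + / 2.
Proof.
  intros [r ->]. unfold even_bracket.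
  replace (2 * r + 2)%nat with (2 * S r)%nat by lia.
  replace (2 * S r / 2)%nat with (S r) by (rewrite Nat.mul_comm, Nat.div_mul; lia).
  rewrite central_binom, moment_even.
  rewrite !plus_INR, !mult_INR, (S_INR r). simpl (INR 2). simpl (INR 1).
  assert (0 <= INR r) by apply pos_INR. field. repeat split; lra.
Qed.

Lemma moment_odd_split m : Nat.Odd m ->
  INR (m + 2) * INR (m + 1) * moment m
  = / 2 * (INR (m + 2) * INR (m + 1) * odd_bracket m) + / 4 * INR (m + 1).
Proof.
  intros [r ->]. unfold odd_bracket.
  replace (2 * r + 1 + 1)%nat with (2 * S r)%nat by lia.
  replace (2 * S r / 2)%nat with (S r) by (rewrite Nat.mul_comm, Nat.div_mul; lia).
  rewrite central_binom, moment_odd.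
  rewrite !plus_INR, !mult_INR, (S_INR r). simpl (INR 2). simpl (INR 1).
  assert (0 <= INR r) by apply pos_INR. field. repeat split; lra.
Qed.

Lemma moment_c1 q : (1 <= q)%nat ->
  moment (2 * q - 1) = / 2 * (/ (2 * INR (2 * q + 1)) + / (4 * INR q) * (1 - / 2 ^ (2 * q) * binom (2 * q) q)).
Proof.
  intros Hq. destruct q as [|r]; [lia|].
  replace (2 * S r - 1)%nat with (2 * r + 1)%nat by lia.
  rewrite central_binom, moment_odd, !plus_INR, !mult_INR, (S_INR r). simpl (INR 2). simpl (INR 1).
  assert (0 <= INR r) by apply pos_INR. field. repeat split; lra.
Qed.

Lemma even_term n k q : (1 <= k <= 2 * q)%nat -> Nat.Even (2 * q - k) ->
  rcoef n k q * moment (2 * q - k)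
  = / 2 * (rcoef n k q * even_bracket (2 * q - k))
    + / 2 * ((-1) ^ q * binom n q * falling (INR (2 * q)) (k - 1)).
Proof.
  intros Hk Hm. destruct k as [|j]; [lia|]. unfold rcoef.
  change (falling (INR (2 * q)) (S j)) with (falling (INR (2 * q)) j * (INR (2 * q) - INR j)).
  replace (INR (2 * q) - INR j) with (INR (2 * q - S j + 1))
    by (rewrite plus_INR, minus_INR, (S_INR j) by lia; simpl (INR 1); ring).
  replace (S j - 1)%nat with j by lia.
  transitivity ((-1) ^ q * binom n q * falling (INR (2 * q)) j * (INR (2 * q - S j + 1) * moment (2 * q - S j)));
    [ring|]. rewrite moment_even_split by exact Hm. ring.
Qed.

Lemma odd_term n k q : (2 <= k <= 2 * q)%nat -> Nat.Odd (2 * q - k) ->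
  rcoef n k q * moment (2 * q - k)
  = / 2 * (rcoef n k q * odd_bracket (2 * q - k))
    + / 4 * ((-1) ^ q * binom n q * (falling (INR (2 * q)) (k - 2) * (2 * INR q + (1 - INR k)))).
Proof.
  intros Hk Hm. destruct k as [|[|j]]; try lia. unfold rcoef.
  change (falling (INR (2 * q)) (S (S j)))
    with (falling (INR (2 * q)) j * (INR (2 * q) - INR j) * (INR (2 * q) - INR (S j))).
  replace (INR (2 * q) - INR j) with (INR (2 * q - S (S j) + 2))
    by (rewrite plus_INR, minus_INR, (S_INR (S j)), (S_INR j) by lia; simpl (INR 2); ring).
  replace (INR (2 * q) - INR (S j)) with (INR (2 * q - S (S j) + 1))
    by (rewrite plus_INR, minus_INR, (S_INR (S j)) by lia; simpl (INR 1); ring).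
  replace (2 * INR q + (1 - INR (S (S j)))) with (INR (2 * q - S (S j) + 1))
    by (rewrite plus_INR, minus_INR, mult_INR, (S_INR (S j)), (S_INR j) by lia; simpl (INR 1); simpl (INR 2); ring).
  replace (S (S j) - 2)%nat with j by lia.
  transitivity ((-1) ^ q * binom n q * falling (INR (2 * q)) j
                * (INR (2 * q - S (S j) + 2) * INR (2 * q - S (S j) + 1) * moment (2 * q - S (S j))));
    [ring|]. rewrite moment_odd_split by exact Hm. ring.
Qed.

(** In each, the terms [q < ceil(k/2)] of the moment sum
    vanish, and the remaining ones match the closed form up to an alternating
    binomial sum of a polynomial of degree [< k + (d-2)/2], which is zero. *)
(* Coefficients of negative powers of [t] are zero. *)
Lemma rcoef_low n k q : (2 * q < k)%nat -> rcoef n k q = 0.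
Proof. intros H. unfold rcoef. rewrite falling_zero by exact H. ring. Qed.

(* [k = 1]: the bracket is exactly twice the odd moment, no correction. *)
Lemma case_k1 d : (2 <= d)%nat -> Nat.Even d -> ck_is d 1 (c1_formula d).
Proof.
  intros Hd He. eapply ck_is_eq; [apply (ck_moment_sum d 1 He Hd)|].
  unfold c1_formula. rewrite sumR_lsum, (lsum_drop_zeros _ 1), <- !lsum_scal by
    (lia || (intros q Hq; rewrite rcoef_low by lia; ring)).
  apply lsum_ext. intros q Hq. apply in_seq in Hq.
  rewrite C2_rcoef, moment_c1 by lia. ring.
Qed.

(* [k] even: the correction is [(2q)(2q-1)...(2q-k+2)], of degree [k-1]. *)
Lemma case_even d k : (2 <= d)%nat -> Nat.Even d -> (2 <= k)%nat -> Nat.Even k ->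
  ck_is d k (ck_even_formula d k).
Proof.
  intros Hd He Hk [k2 Hk2].
  assert (Hs : ((k + 1) / 2)%nat = k2) by (symmetry; apply (Nat.div_unique _ _ _ 1); lia).
  eapply ck_is_eq; [apply (ck_moment_sum d k He Hd)|].
  rewrite ck_even_formula_bracket, sumR_lsum, Hs.
  rewrite (lsum_drop_zeros _ k2) by (lia || (intros q Hq; rewrite rcoef_low by lia; ring)).
  set (P := fun q => falling (INR (2 * q)) (k - 1)).
  rewrite (lsum_ext _ _ (fun q => / 2 * (C2 q d k * even_bracket (2 * q - k))
                                 + / 2 * ((-1) ^ q * binom (k + hm d) q * P q))).
  - rewrite lsum_plus, !lsum_scal, (alt_sum_tail_vanish (k + hm d) k2 (k - 1) P);
      [ring | apply falling_deg_le | lia | lia |].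
    intros q Hq. apply falling_zero. lia.
  - intros q Hq. apply in_seq in Hq.
    rewrite C2_rcoef by lia. apply even_term; [lia|]. exists (q - k2)%nat. lia.
Qed.

(* [k] odd: the correction is [(2q)...(2q-k+3) (2q-k+1)], of degree [k-1];
   it also vanishes at [q = (k-1)/2], which the closed form omits. *)
Lemma case_odd d k : (2 <= d)%nat -> Nat.Even d -> (3 <= k)%nat -> Nat.Odd k ->
  ck_is d k (ck_odd_formula d k).
Proof.
  intros Hd He Hk [k2 Hk2].
  assert (Hs : ((k + 1) / 2)%nat = S k2) by (symmetry; apply (Nat.div_unique _ _ _ 0); lia).
  eapply ck_is_eq; [apply (ck_moment_sum d k He Hd)|].
  rewrite ck_odd_formula_bracket, sumR_lsum, Hs.
  rewrite (lsum_drop_zeros _ (S k2)) by (lia || (intros q Hq; rewrite rcoef_low by lia; ring)).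
  set (P := fun q => falling (INR (2 * q)) (k - 2) * (2 * INR q + (1 - INR k))).
  rewrite (lsum_ext _ _ (fun q => / 2 * (C2 q d k * odd_bracket (2 * q - k))
                                 + / 4 * ((-1) ^ q * binom (k + hm d) q * P q))).
  - rewrite lsum_plus, !lsum_scal, (alt_sum_tail_vanish (k + hm d) (S k2) (S (k - 2)) P);
      [ring | apply deg_le_mul_affine, falling_deg_le | lia | lia |].
    intros q Hq. unfold P. destruct (Nat.eq_dec q k2) as [->|Hne].
    + rewrite Hk2, plus_INR, mult_INR. simpl (INR 1). simpl (INR 2). ring.
    + rewrite falling_zero by lia. ring.
  - intros q Hq. apply in_seq in Hq.
    rewrite C2_rcoef by lia. apply odd_term; [lia|]. exists (q - S k2)%nat. lia.
Qed.

Lemma is_RInt_reflect (f : R -> R) (l : R) :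
  is_RInt f 0 PI l -> is_RInt (fun t => f (PI - t)) 0 PI l.
Proof.
  intros Hf.
  assert (H : is_RInt (fun y => -1 * f (-1 * y + PI)) 0 PI (- l)).
  { apply (is_RInt_comp_lin (V := R_NormedModule) f (-1) PI 0 PI).
    replace (-1 * 0 + PI) with PI by ring. replace (-1 * PI + PI) with 0 by ring.
    exact (is_RInt_swap (V := R_NormedModule) f PI 0 l Hf). }
  apply (is_RInt_eq_val _ _ _ (-1 * - l)); [|ring].
  apply (is_RInt_ext_all (fun y => -1 * (-1 * f (-1 * y + PI)))), is_RInt_scal_R, H.
  intros y. replace (-1 * y + PI) with (PI - y) by ring. ring.
Qed.

(* By the symmetry [θ -> PI - θ] of [sin], the weight [PI - θ] averages to [PI / 2]. *)
Lemma weighted_sin_integral n : is_RInt (fun t => (PI - t) * sin t ^ n) 0 PI (PI / 2 * wsin n).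
Proof.
  assert (Hex : ex_RInt (fun t => (PI - t) * sin t ^ n) 0 PI).
  { apply (ex_RInt_continuous (V := R_CompleteNormedModule)). intros. continuity_by_derive. }
  destruct Hex as [l Hl].
  assert (Hr : is_RInt (fun t => t * sin t ^ n) 0 PI l).
  { apply (is_RInt_ext_all (fun t => (PI - (PI - t)) * sin (PI - t) ^ n)).
    - intros t. rewrite sin_PI_x. ring.
    - exact (is_RInt_reflect (fun t => (PI - t) * sin t ^ n) l Hl). }
  assert (Hpi : is_RInt (fun t => 1 * ((PI - t) * sin t ^ n) + 1 * (t * sin t ^ n)) 0 PI (PI * wsin n)).
  { eapply is_RInt_ext_all; [|exact (is_RInt_scal_R _ _ _ PI _ (wsin_is n))]. intros t. cbv beta. ring. }
  assert (Hsum := is_RInt_same _ _ _ _ _ (is_RInt_lin _ _ _ _ _ _ 1 1 Hl Hr) Hpi).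
  apply (is_RInt_eq_val _ _ _ _ _ Hl). lra.
Qed.

(* Integration by parts against [sin^(j+1) / (j+1)], which vanishes at both ends. *)
Lemma weighted_cos_sin_integral j :
  is_RInt (fun t => (PI - t) * cos t * sin t ^ j) 0 PI (wsin (S j) / (INR j + 1)).
Proof.
  assert (Hb : INR j + 1 <> 0) by (generalize (pos_INR j); lra).
  set (F := fun t => (PI - t) * / (INR j + 1) * sin t ^ (S j)).
  assert (I1 : is_RInt (fun t => - / (INR j + 1) * sin t ^ (S j) + (PI - t) * cos t * sin t ^ j) 0 PI 0).
  { apply (is_RInt_eq_val _ _ _ (F PI - F 0)).
    - apply is_RInt_ftc; intros x; unfold F.
      + auto_derive; auto. fold_INR_S. rewrite !S_INR. repeat rewrite <- tech_pow_Rmult. field. auto.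
      + continuity_by_derive.
    - unfold F. rewrite sin_0, sin_PI. simpl. ring. }
  apply (is_RInt_eq_val _ _ _ (1 * 0 + / (INR j + 1) * wsin (S j))); [|unfold Rdiv; ring].
  eapply is_RInt_ext_all; [|exact (is_RInt_lin _ _ _ _ _ _ 1 (/ (INR j + 1)) I1 (wsin_is (S j)))].
  intros x. cbv beta. ring.
Qed.

(* [∫_0^PI cos^(2q) sin = 2/(2q+1)], from the primitive [-cos^(2q+1)/(2q+1)]. *)
Lemma cos_even_sin_integral q : is_RInt (fun t => cos t ^ (2 * q) * sin t) 0 PI (2 / (2 * INR q + 1)).
Proof.
  assert (Hq : 2 * INR q + 1 <> 0) by (generalize (pos_INR q); lra).
  set (F := fun t => - / (2 * INR q + 1) * cos t ^ (S (2 * q))).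
  apply (is_RInt_eq_val _ _ _ (F PI - F 0)).
  - apply is_RInt_ftc; intros x; unfold F.
    + auto_derive; auto. fold_INR_S. replace (q + (q + 0))%nat with (2 * q)%nat by lia.
      rewrite S_INR, mult_INR. simpl (INR 2). field. auto.
    + continuity_by_derive.
  - unfold F. rewrite cos_PI, cos_0, pow1, <- tech_pow_Rmult, pow_mult.
    replace ((-1) ^ 2) with 1 by ring. rewrite pow1. field. auto.
Qed.

(* Expanding [sin^(2h+1) = (1 - cos^2)^h sin] evaluates the alternating sum of [c0_formula]. *)
Lemma alt_sum_odd_reciprocals h :
  sumR 0 h (fun q => (-1) ^ q * binom h q * / INR (2 * q + 1)) = wsin (2 * h + 1) / 2.
Proof.
  assert (H1 : is_RInt (fun t => rodrigues h 0 (cos t) * sin t) 0 PI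
      (lsum (seq 0 (S h)) (fun q => rcoef h 0 q * (2 / (2 * INR q + 1))))).
  { eapply is_RInt_ext_all;
      [|apply (is_RInt_lsum _ (fun q t => rcoef h 0 q * (cos t ^ (2 * q) * sin t)))].
    - intros x. unfold rodrigues. rewrite (Rmult_comm _ (sin x)), <- lsum_scal.
      apply lsum_ext. intros q _. rewrite Nat.sub_0_r. ring.
    - intros q _. apply is_RInt_scal_R, cos_even_sin_integral. }
  assert (H2 : is_RInt (fun t => rodrigues h 0 (cos t) * sin t) 0 PI (wsin (2 * h + 1))).
  { eapply is_RInt_ext_all; [|apply wsin_is]. intros x. rewrite rodrigues_0.
    replace (1 - cos x ^ 2) with (sin x ^ 2) by (generalize (sin_sqr x); intros; ring_simplify; lra).
    rewrite <- pow_mult, pow_add. ring. }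
  rewrite (is_RInt_same _ _ _ _ _ H2 H1), sumR_lsum, Nat.sub_0_r.
  unfold Rdiv. rewrite Rmult_comm, <- lsum_scal. apply lsum_ext.
  intros q _. unfold rcoef. simpl falling. rewrite plus_INR, mult_INR. simpl (INR 2). simpl (INR 1).
  assert (0 <= INR q) by apply pos_INR. field. lra.
Qed.

Lemma binom_odd_mid h : binom (2 * h + 1) (S h) = binom (2 * h) h * (2 * INR h + 1) / (INR h + 1).
Proof.
  rewrite !binom_le by lia. unfold Binomial.C.
  replace (2 * h + 1 - S h)%nat with h by lia. replace (2 * h - h)%nat with h by lia.
  replace (2 * h + 1)%nat with (S (2 * h)) by lia. rewrite !fact_simpl, !mult_INR, !S_INR, mult_INR.
  simpl (INR 2).
  assert (INR (fact h) <> 0) by apply INR_fact_neq_0.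
  assert (0 <= INR h) by apply pos_INR.
  field. repeat split; lra.
Qed.

Lemma theta_integral_k0 h :
  is_RInt (fun t => theta_kernel t * rodrigues h 0 (cos t) * sin t) 0 PI
    (/ (4 * PI) * (PI / 2 * wsin (2 * h + 1) + wsin (2 * h + 2) / (INR (2 * h + 1) + 1))).
Proof.
  replace (2 * h + 2)%nat with (S (2 * h + 1)) by lia.
  apply (is_RInt_eq_val _ _ _ (/ (4 * PI) * (1 * (PI / 2 * wsin (2 * h + 1))
                                + 1 * (wsin (S (2 * h + 1)) / (INR (2 * h + 1) + 1))))); [|ring].
  eapply is_RInt_ext_all; [|apply is_RInt_scal_R, (is_RInt_lin _ _ _ _ _ _ 1 1
      (weighted_sin_integral (2 * h + 1)) (weighted_cos_sin_integral (2 * h + 1)))].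
  intros x. cbv beta. unfold theta_kernel. rewrite rodrigues_0.
  replace (1 - cos x ^ 2) with (sin x ^ 2) by (generalize (sin_sqr x); intros; ring_simplify; lra).
  rewrite <- pow_mult, pow_add. ring.
Qed.

Lemma case_k0 d : (2 <= d)%nat -> Nat.Even d -> ck_is d 0 (c0_formula d).
Proof.
  intros Hd He. destruct (even_dim d He Hd) as [h [Hd1 [Hd2 Hd3]]].
  eapply ck_is_eq; [apply ck_of_theta_integral; auto; rewrite Hd3; apply theta_integral_k0|].
  unfold c0_formula. rewrite Nat.add_0_l, Hd2, Hd3, alt_sum_odd_reciprocals. subst d.
  replace (2 * h + 2)%nat with (2 * S h)%nat by lia.
  replace (2 * S h - 1)%nat with (2 * h + 1)%nat by lia.
  rewrite wsin_odd, wsin_even, binom_odd_mid.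
  rewrite !binom_central, central_S.
  assert (Hc : 0 < central h) by apply central_pos.
  replace (2 ^ (2 * S h + 1)) with (8 * 2 ^ (2 * h))
    by (replace (2 * S h + 1)%nat with (3 + 2 * h)%nat by lia; rewrite pow_add; simpl; ring).
  replace (2 ^ (2 * h + 1)) with (2 * 2 ^ (2 * h)) by (rewrite pow_add; simpl; ring).
  replace (2 ^ (2 * S h)) with (4 * 2 ^ (2 * h))
    by (replace (2 * S h)%nat with (2 + 2 * h)%nat by lia; rewrite pow_add; simpl; ring).
  assert (Htw : 0 < 2 ^ (2 * h)) by (apply pow_lt; lra).
  rewrite !plus_INR, !mult_INR, !S_INR, INR_0.
  assert (0 <= INR h) by apply pos_INR. assert (PI > 0) by apply PI_RGT_0.
  field. repeat split; lra.
Qed.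

Theorem mainTheorem7 (d : nat) (hd : (2 <= d)%nat) (hev : Nat.Even d) :
  ck_is d 0 (c0_formula d) /\
  ck_is d 1 (c1_formula d) /\
  (forall k : nat, (2 <= k)%nat -> Nat.Even k -> ck_is d k (ck_even_formula d k)) /\
  (forall k : nat, (3 <= k)%nat -> Nat.Odd k -> ck_is d k (ck_odd_formula d k)).
Proof.
  split; [apply case_k0; auto|].
  split; [apply case_k1; auto|].
  split; intros k Hk Hpar; [apply case_even | apply case_odd]; auto.
Qed.
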